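(* Let $U,U'\in\mathcal G$ be distant, let $\lambda:U\to U'$ be a $K$-linear isomorphism, and let $R=\operatorname{End}_K(U)$. For $(x,y)\in Z^2\setminus\{(0,0)\}$ put $T^{(x,y)}:=\{xu+yu^\lambda\mid u\in U\}$. Then the set $\{T^{(x,y)}\mid (x,y)\in Z^2\setminus\{(0,0)\}\}$ is, on the one hand, the image under $\Phi$ of a $Z$-chain of $\mathbb P(R)$ and, on the other hand, a $Z$-regulus.
   Context: $K$ is a (not necessarily commutative) field with centre $Z$, and $V$ is a left vector space over $K$ of arbitrary (possibly infinite) dimension with $\dim V>2$. $\mathcal G:=\{X\le V\mid X\cong V/X\}$, assumed nonempty. Points are $1$-dimensional and lines $2$-dimensional subspaces; two subspaces meet if they have a common point. $X,Y\in\mathcal G$ are distant if $V=X\oplus Y$. A $Z$-regulus is a subset $\mathcal R\subseteq\mathcal G$ such that (R1) its elements are mutually distant and $|\mathcal R|\ge3$; (R2) if a line meets three mutually distinct elements of $\mathcal R$ then it meets all elements of $\mathcal R$; (R3) $\mathcal R$ is not properly contained in any subset of $\mathcal G$ satisfying (R1) and (R2). Maps are written as exponents on the right, $u^{\beta\lambda}=(u^\beta)^\lambda$. For a ring $S$ with $1$, $\mathrm{GL}(2,S)$ acts on the free left module $S^2$ (row vectors, multiplied by matrices on the right) and on its submodules; the projective line $\mathbb P(S)$ is the orbit of $S(1,0)$ under $\mathrm{GL}(2,S)$. With $R=\operatorname{End}_K(U)$, the field $Z$ is embedded in $R$ via $a\mapsto a\cdot\mathrm{id}_U$; this yields an embedding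 $\mathbb P(Z)\to\mathbb P(R)$, $Z(x,y)\mapsto R(x\cdot\mathrm{id},y\cdot\mathrm{id})$, and the $Z$-chains of $\mathbb P(R)$ are the images of (the embedded) $\mathbb P(Z)$ under $\mathrm{GL}(2,R)$. The map $\Phi:\mathbb P(R)\to\mathcal G$, $R(\alpha,\beta)\mapsto\{u^\alpha+u^{\beta\lambda}\mid u\in U\}$, is a well-defined bijection. *)

(* Subsets of V are predicates
   V -> Prop.  Maps are written as ordinary functions: the paper's u^f is
   [f u] here, and the paper's product  f g  in End(U) ("first f, then g")
   is [rmul f g = fun v => g (f v)]. *)
From HB Require Import structures.
From mathcomp Require Import all_boot all_order all_algebra.
Set Implicit Arguments. Unset Strict Implicit. Unset Printing Implicit Defensive.
Import GRing.Theory.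
Local Open Scope ring_scope.

Section Defs.
Variables (K : unitRingType) (V : lmodType K).

Definition division_ring := forall a : K, a != 0 -> a \is a GRing.unit.

Definition central (z : K) := forall k : K, z * k = k * z.

Definition dim_gt2 :=
  exists v1 v2 v3 : V, forall a b c : K,
    a *: v1 + b *: v2 + c *: v3 = 0 -> [/\ a = 0, b = 0 & c = 0].

Definition subspace (X : V -> Prop) :=
  [/\ X 0, (forall u w, X u -> X w -> X (u + w)) &
      (forall (a : K) u, X u -> X (a *: u))].

(* the coset v + X, an element of V/X; V/X is the set of these cosets,
   with (v + X) + (w + X) = (v + w) + X and a(v + X) = av + X *)
Definition coset (X : V -> Prop) (v : V) : V -> Prop := fun w => X (w - v).

(* X is isomorphic to V/X: there is a K-linear bijection X -> V/X.
   Such a map is written x |-> coset X (f x) for a representative map f. *)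
Definition iso_quot (X : V -> Prop) :=
  exists f : V -> V,
    [/\ (forall x y, X x -> X y -> coset X (f (x + y)) = coset X (f x + f y)),
        (forall (a : K) x, X x -> coset X (f (a *: x)) = coset X (a *: f x)),
        (forall x y, X x -> X y -> coset X (f x) = coset X (f y) -> x = y) &
        (forall v, exists x, X x /\ coset X (f x) = coset X v)].

Definition inG (X : V -> Prop) := subspace X /\ iso_quot X.

Definition distant (X Y : V -> Prop) :=
  (forall v, X v -> Y v -> v = 0) /\
  (forall v, exists x y, [/\ X x, Y y & v = x + y]).

Definition line (L : V -> Prop) :=
  exists p q : V,
    (forall a b : K, a *: p + b *: q = 0 -> a = 0 /\ b = 0) /\
    L = (fun w => exists a b : K, w = a *: p + b *: q).

Definition meet (X Y : V -> Prop) := exists v, [/\ v != 0, X v & Y v].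

Definition R1 (S : (V -> Prop) -> Prop) :=
  (forall X Y, S X -> S Y -> X <> Y -> distant X Y) /\
  (exists X Y W, [/\ S X, S Y, S W & [/\ X <> Y, Y <> W & X <> W]]).

Definition R2 (S : (V -> Prop) -> Prop) :=
  forall L, line L ->
    (exists X Y W, [/\ S X, S Y, S W, [/\ X <> Y, Y <> W & X <> W] &
                       [/\ meet L X, meet L Y & meet L W]]) ->
    forall X, S X -> meet L X.

Definition regulus (S : (V -> Prop) -> Prop) :=
  [/\ (forall X, S X -> inG X), R1 S, R2 S &
      ~ (exists S' : (V -> Prop) -> Prop,
           [/\ (forall X, S' X -> inG X), R1 S', R2 S',
               (forall X, S X -> S' X) & exists X, S' X /\ ~ S X])].

Definition lin_iso (U U' : V -> Prop) (lam : V -> V) :=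
  [/\ (forall u, U u -> U' (lam u)),
      (forall u w, U u -> U w -> lam (u + w) = lam u + lam w),
      (forall (a : K) u, U u -> lam (a *: u) = a *: lam u),
      (forall u w, U u -> U w -> lam u = lam w -> u = w) &
      (forall u', U' u' -> exists u, U u /\ lam u = u')].

(* ---- the ring R = End_K(U), represented by maps V -> V, considered on U ---- *)
Definition endo (U : V -> Prop) (f : V -> V) :=
  [/\ (forall u, U u -> U (f u)),
      (forall u w, U u -> U w -> f (u + w) = f u + f w) &
      (forall (a : K) u, U u -> f (a *: u) = a *: f u)].

Definition req (U : V -> Prop) (f g : V -> V) := forall u, U u -> f u = g u.

Definition radd (f g : V -> V) : V -> V := fun v => f v + g v.
Definition rmul (f g : V -> V) : V -> V := fun v => g (f v).
Definition rone : V -> V := fun v => v.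
Definition rzero : V -> V := fun _ => 0.
Definition rscal (a : K) : V -> V := fun v => a *: v.

Record mx2 := Mx2 { m11 : V -> V; m12 : V -> V; m21 : V -> V; m22 : V -> V }.

Definition mx2_endo U (M : mx2) :=
  [/\ endo U (m11 M), endo U (m12 M), endo U (m21 M) & endo U (m22 M)].

Definition mx2_mul (M N : mx2) : mx2 :=
  Mx2 (radd (rmul (m11 M) (m11 N)) (rmul (m12 M) (m21 N)))
      (radd (rmul (m11 M) (m12 N)) (rmul (m12 M) (m22 N)))
      (radd (rmul (m21 M) (m11 N)) (rmul (m22 M) (m21 N)))
      (radd (rmul (m21 M) (m12 N)) (rmul (m22 M) (m22 N))).

Definition mx2_eq U (M N : mx2) :=
  [/\ req U (m11 M) (m11 N), req U (m12 M) (m12 N),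
      req U (m21 M) (m21 N) & req U (m22 M) (m22 N)].

Definition mx2_one : mx2 := Mx2 rone rzero rzero rone.

Definition GL2 U (M : mx2) :=
  mx2_endo U M /\
  exists N, [/\ mx2_endo U N, mx2_eq U (mx2_mul M N) mx2_one &
                mx2_eq U (mx2_mul N M) mx2_one].

Definition rowmul (a b : V -> V) (M : mx2) : (V -> V) * (V -> V) :=
  (radd (rmul a (m11 M)) (rmul b (m21 M)),
   radd (rmul a (m12 M)) (rmul b (m22 M))).

(* Phi (R(alpha, beta)) = { u^alpha + u^(beta lam) | u in U } *)
Definition Phi (U : V -> Prop) (lam : V -> V) (p : (V -> V) * (V -> V)) : V -> Prop :=
  fun w => exists u, U u /\ w = p.1 u + lam (p.2 u).

(* The Z-chain with matrix M is { R(x id, y id) M | (x,y) in Z^2 \ {(0,0)} }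
   = { R((x id, y id) M) }; its image under Phi: *)
Definition Phi_zchain (U : V -> Prop) (lam : V -> V) (M : mx2) : (V -> Prop) -> Prop :=
  fun X => exists x y : K,
    [/\ central x, central y, ~ (x = 0 /\ y = 0) &
        X = Phi U lam (rowmul (rscal x) (rscal y) M)].

Definition Tset (U : V -> Prop) (lam : V -> V) (x y : K) : V -> Prop :=
  fun w => exists u, U u /\ w = x *: u + y *: lam u.

End Defs.

From HB Require Import structures.
From mathcomp Require Import all_boot all_order all_algebra.
From Stdlib Require Import FunctionalExtensionality PropExtensionality ClassicalEpsilon Classical.
Set Implicit Arguments. Unset Strict Implicit. Unset Printing Implicit Defensive.
Import GRing.Theory.
Local Open Scope ring_scope.

(* Every vector of V = U (+) U' is uniquely a + b^lam with a, b in U, and in these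
   coordinates T^(x,y) = {(xu, yu)}.  Cramer's rule for the central pairs (x,y),
   (x',y') shows that T^(x,y) and T^(x',y') coincide when the pairs are proportional
   and are complementary otherwise; this gives (R1), and membership in G because
   each T^(x,y) is isomorphic to U and has some T^(x',y') as complement.  A line
   meeting three of the sets contains a point of the form xu + yu^lam of each, so by
   Cramer it contains u and u^lam and meets them all (R2).  An extra element X of a
   larger set satisfying (R1), (R2) meets every line through u and u^lam in a point
   u + c_u u^lam; comparing u, v and u + v for independent u, v shows that c_u is a
   constant c, necessarily central, so X and T^(1,c) share a point without being
   equal (R3).  The chain is the image of P(Z) under the identity matrix. *)

Lemma pred_ext (T : Type) (P Q : T -> Prop) : (forall v, P v <-> Q v) -> P = Q.
Proof.
by move=> PQ; apply: functional_extensionality => v; apply: propositional_extensionality.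
Qed.

Section SkewField.
Variables (K : unitRingType) (V : lmodType K).
Hypothesis HK : division_ring K.

Lemma scaleVKr (a : K) (v : V) : a != 0 -> a^-1 *: (a *: v) = v.
Proof. by move=> /HK a_unit; rewrite scalerA mulVr // scale1r. Qed.

Lemma scaler_nz_eq0 (a : K) (v : V) : a != 0 -> a *: v = 0 -> v = 0.
Proof. by move=> a_nz av0; rewrite -(scaleVKr v a_nz) av0 scaler0. Qed.

Lemma scaler_eq0_coef (a : K) (v : V) : v != 0 -> a *: v = 0 -> a = 0.
Proof.
move=> v_nz av0; apply/eqP; apply: contraNT v_nz => a_nz.
by apply/eqP; apply: scaler_nz_eq0 av0.
Qed.

Lemma central0 : central (0 : K).
Proof. by move=> k; rewrite mul0r mulr0. Qed.

Lemma central1 : central (1 : K).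
Proof. by move=> k; rewrite mul1r mulr1. Qed.

Lemma scale_centralC (c d : K) (v : V) : central c -> c *: (d *: v) = d *: (c *: v).
Proof. by move=> cc; rewrite !scalerA cc. Qed.

Lemma pair_nz_l (x y : K) : x != 0 -> ~ (x = 0 /\ y = 0).
Proof. by move=> /eqP x_nz [] /x_nz. Qed.

Lemma pair_nz_r (x y : K) : y != 0 -> ~ (x = 0 /\ y = 0).
Proof. by move=> /eqP y_nz [] _ /y_nz. Qed.

Definition det (x y x' y' : K) := x * y' - y * x'.

Lemma central_pair_proportional (x y x' y' : K) : central x' -> ~ (x = 0 /\ y = 0) ->
  x * y' = y * x' -> exists c, x' = c * x /\ y' = c * y.
Proof.
move=> cx' xy_nz D0; have [x0 | x_nz] := eqVneq x 0.
  have y_nz : y != 0 by apply/eqP => y0; apply: xy_nz.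
  exists (y' * y^-1); rewrite x0 mulr0 -mulrA (mulVr (HK y_nz)) mulr1; split=> //.
  by rewrite -[x']mul1r -(mulVr (HK y_nz)) -mulrA -D0 x0 mul0r mulr0.
exists (x' * x^-1); rewrite -mulrA (mulVr (HK x_nz)) mulr1; split=> //.
by rewrite -mulrA cx' -mulrA -D0 mulrA (mulVr (HK x_nz)) mul1r.
Qed.

Lemma exists_det_nz (x y : K) : ~ (x = 0 /\ y = 0) ->
  exists x' y', [/\ central x', central y', ~ (x' = 0 /\ y' = 0) & det x y x' y' != 0].
Proof.
move=> xy_nz; have [x0 | x_nz] := eqVneq x 0.
  have y_nz : y != 0 by apply/eqP => y0; apply: xy_nz.
  exists 1, 0; split; [exact: central1 | exact: central0 | exact: pair_nz_l (oner_neq0 K) |].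
  by rewrite /det x0 mul0r mulr1 sub0r oppr_eq0.
exists 0, 1; split; [exact: central0 | exact: central1 | exact: pair_nz_r (oner_neq0 K) |].
by rewrite /det mulr1 mulr0 subr0.
Qed.

Lemma cramer_coord (x1 y1 x2 y2 x3 y3 : K) (A B u : V) : central x2 -> central y2 ->
  x3 *: u = x1 *: A + x2 *: B -> y3 *: u = y1 *: A + y2 *: B ->
  det x1 y1 x2 y2 *: A = det x3 y3 x2 y2 *: u.
Proof.
move=> cx2 cy2 Ex Ey; rewrite /det !scalerBl -(cy2 x3) -(cx2 y3) -!scalerA Ex Ey.
rewrite !scalerDr !scalerA (cy2 x1) (cx2 y1) (cy2 x2).
by rewrite opprD addrACA subrr addr0.
Qed.

End SkewField.

Section Subspaces.
Variables (K : unitRingType) (V : lmodType K).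
Implicit Types (X Y W : V -> Prop) (f g : V -> V).

Lemma subspace0 X : subspace X -> X 0.
Proof. by case. Qed.

Lemma subspaceD X u w : subspace X -> X u -> X w -> X (u + w).
Proof. by case=> _ + _; apply. Qed.

Lemma subspaceZ X (a : K) u : subspace X -> X u -> X (a *: u).
Proof. by case=> _ _; apply. Qed.

Lemma subspaceN X u : subspace X -> X u -> X (- u).
Proof. by move=> sX Xu; rewrite -scaleN1r; apply: subspaceZ. Qed.

Lemma subspaceB X u w : subspace X -> X u -> X w -> X (u - w).
Proof. by move=> sX Xu Xw; apply: subspaceD => //; apply: subspaceN. Qed.

Definition sumsp X Y (v : V) := exists x y, [/\ X x, Y y & v = x + y].

Lemma subspace_sumsp X Y : subspace X -> subspace Y -> subspace (sumsp X Y).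
Proof.
move=> sX sY; split.
- by exists 0, 0; rewrite addr0; split=> //; apply: subspace0.
- move=> _ _ [x [y [Xx Yy ->]]] [x' [y' [Xx' Yy' ->]]].
  by exists (x + x'), (y + y'); rewrite addrACA; split=> //; apply: subspaceD.
- move=> a _ [x [y [Xx Yy ->]]].
  by exists (a *: x), (a *: y); rewrite scalerDr; split=> //; apply: subspaceZ.
Qed.

Lemma sumspl X Y x : subspace Y -> X x -> sumsp X Y x.
Proof. by move=> sY Xx; exists x, 0; rewrite addr0; split=> //; apply: subspace0. Qed.

Lemma sumspr X Y y : subspace X -> Y y -> sumsp X Y y.
Proof. by move=> sX Yy; exists 0, y; rewrite add0r; split=> //; apply: subspace0. Qed.

Lemma distant_decomp_uniq X Y a b a' b' : subspace X -> subspace Y -> distant X Y ->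
  X a -> Y b -> X a' -> Y b' -> a + b = a' + b' -> a = a' /\ b = b'.
Proof.
move=> sX sY [XY0 _] Xa Yb Xa' Yb' E.
have Ea : a - a' = b' - b by apply/eqP; rewrite subr_eq addrAC [b' + a']addrC -E addrK.
have a0 : a - a' = 0 by apply: XY0; [apply: subspaceB | rewrite Ea; apply: subspaceB].
split; apply/eqP; rewrite -subr_eq0; last by rewrite -opprB oppr_eq0 -Ea a0.
by rewrite a0.
Qed.

Lemma coset_eq X u v : subspace X -> coset X u = coset X v <-> X (u - v).
Proof.
move=> sX; split=> [E | Xuv].
  by change (coset X v u); rewrite -E /coset subrr; apply: subspace0.
apply: pred_ext => w; rewrite /coset; split=> Xw.
  by have := subspaceD sX Xw Xuv; rewrite addrA subrK.
by have := subspaceB sX Xw Xuv; rewrite opprB addrA subrK.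
Qed.

Section LinIso.
Variables (X Y : V -> Prop) (f : V -> V).
Hypothesis fXY : lin_iso X Y f.

Lemma lin_iso_in u : X u -> Y (f u).
Proof. by case: fXY => + _ _ _ _; apply. Qed.

Lemma lin_isoD u w : X u -> X w -> f (u + w) = f u + f w.
Proof. by case: fXY => _ + _ _ _; apply. Qed.

Lemma lin_isoZ (a : K) u : X u -> f (a *: u) = a *: f u.
Proof. by case: fXY => _ _ + _ _; apply. Qed.

Lemma lin_iso_inj u w : X u -> X w -> f u = f w -> u = w.
Proof. by case: fXY => _ _ _ + _; apply. Qed.

Lemma lin_iso_onto w : Y w -> exists u, X u /\ f u = w.
Proof. by case: fXY => _ _ _ _; apply. Qed.

Lemma lin_iso0 : subspace X -> f 0 = 0.
Proof. by move=> sX; rewrite -(scale0r 0) lin_isoZ ?scale0r //; apply: subspace0. Qed.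

Lemma lin_iso_eq0 u : subspace X -> X u -> f u = 0 -> u = 0.
Proof.
move=> sX Xu fu0; apply: (lin_iso_inj Xu (subspace0 sX)).
by rewrite fu0 lin_iso0.
Qed.

Lemma lin_isoB u w : subspace X -> X u -> X w -> f (u - w) = f u - f w.
Proof.
by move=> sX Xu Xw; rewrite -!scaleN1r lin_isoD ?lin_isoZ //; apply: subspaceZ.
Qed.

End LinIso.

Lemma lin_iso_comp X Y W f g : lin_iso X Y f -> lin_iso Y W g -> lin_iso X W (g \o f).
Proof.
move=> fXY gYW; split=> /=.
- by move=> u Xu; apply: (lin_iso_in gYW); apply: (lin_iso_in fXY).
- move=> u w Xu Xw; rewrite (lin_isoD fXY) //.
  by rewrite (lin_isoD gYW) //; apply: (lin_iso_in fXY).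
- by move=> a u Xu; rewrite (lin_isoZ fXY) // (lin_isoZ gYW) //; apply: (lin_iso_in fXY).
- move=> u w Xu Xw E; apply: (lin_iso_inj fXY) => //.
  by apply: (lin_iso_inj gYW) => //; apply: (lin_iso_in fXY).
- move=> z Wz; have [y [Yy <-]] := lin_iso_onto gYW Wz.
  by have [x [Xx <-]] := lin_iso_onto fXY Yy; exists x.
Qed.

Lemma subspace_lin_iso X Y f : subspace X -> lin_iso X Y f -> subspace Y.
Proof.
move=> sX fXY; split.
- by rewrite -(lin_iso0 fXY sX); apply: (lin_iso_in fXY); apply: subspace0.
- move=> _ _ /(lin_iso_onto fXY) [u [Xu <-]] /(lin_iso_onto fXY) [w [Xw <-]].
  by rewrite -(lin_isoD fXY) //; apply: (lin_iso_in fXY); apply: subspaceD.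
- move=> a _ /(lin_iso_onto fXY) [u [Xu <-]].
  by rewrite -(lin_isoZ fXY) //; apply: (lin_iso_in fXY); apply: subspaceZ.
Qed.

Lemma lin_iso_inv X Y f : subspace X -> lin_iso X Y f -> exists g, lin_iso Y X g.
Proof.
move=> sX fXY; have sY := subspace_lin_iso sX fXY.
pose g w := epsilon (inhabits 0) (fun u => X u /\ f u = w).
have gK w : Y w -> X (g w) /\ f (g w) = w.
  by move=> /(lin_iso_onto fXY) ex_u; exact: epsilon_spec ex_u.
have fK u : X u -> g (f u) = u.
  move=> Xu; have [Xg fg] := gK _ (lin_iso_in fXY Xu).
  exact: (lin_iso_inj fXY).
exists g; split.
- by move=> w /gK [].
- move=> _ _ /(lin_iso_onto fXY) [u [Xu <-]] /(lin_iso_onto fXY) [w [Xw <-]].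
  by rewrite -(lin_isoD fXY) // !fK //; apply: subspaceD.
- move=> a _ /(lin_iso_onto fXY) [u [Xu <-]].
  by rewrite -(lin_isoZ fXY) // !fK //; apply: subspaceZ.
- by move=> w z Yw Yz E; rewrite -(gK _ Yw).2 -(gK _ Yz).2 E.
- by move=> u Xu; exists (f u); split; [apply: (lin_iso_in fXY) | apply: fK].
Qed.

Lemma iso_quot_of_complement X Y f : subspace X -> subspace Y -> distant X Y ->
  lin_iso X Y f -> iso_quot X.
Proof.
move=> sX sY [XY0 XY] fXY; exists f; split.
- by move=> u w Xu Xw; rewrite (lin_isoD fXY).
- by move=> a u Xu; rewrite (lin_isoZ fXY).
- move=> u w Xu Xw /(coset_eq _ _ sX) Xf; apply: (lin_iso_inj fXY) => //.
  apply/eqP; rewrite -subr_eq0; apply/eqP; apply: XY0 => //.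
  by apply: subspaceB => //; apply: (lin_iso_in fXY).
- move=> v; have [x [y [Xx Yy ->]]] := XY v.
  have [u [Xu <-]] := lin_iso_onto fXY Yy; exists u; split=> //.
  by apply/(coset_eq _ _ sX); rewrite opprD addrA addrAC subrr add0r; apply: subspaceN.
Qed.

End Subspaces.

Section Span2.
Variables (K : unitRingType) (V : lmodType K).
Hypothesis HK : division_ring K.

Definition span2 (p q v : V) := exists a b : K, v = a *: p + b *: q.

Definition indep (p q : V) := forall a b : K, a *: p + b *: q = 0 -> a = 0 /\ b = 0.

Lemma span2_subspace p q : subspace (span2 p q).
Proof.
split.
- by exists 0, 0; rewrite !scale0r addr0.
- move=> _ _ [a [b ->]] [a' [b' ->]]; exists (a + a'), (b + b').
  by rewrite !scalerDl addrACA.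
- by move=> k _ [a [b ->]]; exists (k * a), (k * b); rewrite scalerDr !scalerA.
Qed.

Lemma span2l p q : span2 p q p.
Proof. by exists 1, 0; rewrite scale1r scale0r addr0. Qed.

Lemma span2r p q : span2 p q q.
Proof. by exists 0, 1; rewrite scale1r scale0r add0r. Qed.

Lemma indep_nz p q : indep p q -> p != 0 /\ q != 0.
Proof.
move=> ind; split; apply/eqP => E.
  by have := ind 1 0; rewrite E scaler0 scale0r addr0 => /(_ erefl) [/eqP]; rewrite oner_eq0.
by have := ind 0 1; rewrite E scaler0 scale0r addr0 => /(_ erefl) [_ /eqP]; rewrite oner_eq0.
Qed.

Lemma indep_addr_nz p q : indep p q -> p + q != 0.
Proof.
move=> ind; apply/eqP => E.
by have := ind 1 1; rewrite !scale1r E => /(_ erefl) [/eqP]; rewrite oner_eq0.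
Qed.

Lemma indep_scalel (k : K) p q : k != 0 -> indep p q -> indep (k *: p) q.
Proof.
move=> k_nz ind a b; rewrite scalerA => /ind [ak0 ->]; split=> //.
by rewrite -[a]mulr1 -(mulrV (HK k_nz)) mulrA ak0 mul0r.
Qed.

Lemma indep_of_distant (X Y : V -> Prop) w1 w2 : subspace X -> subspace Y -> distant X Y ->
  X w1 -> Y w2 -> w1 != 0 -> w2 != 0 -> indep w1 w2.
Proof.
move=> sX sY [XY0 _] Xw1 Yw2 w1_nz w2_nz a b E.
have aw1 : a *: w1 = - (b *: w2) by apply/eqP; rewrite -subr_eq0 opprK E.
have a0 : a = 0.
  apply: (scaler_eq0_coef HK w1_nz); apply: XY0; first exact: subspaceZ.
  by rewrite aw1; apply: subspaceN => //; apply: subspaceZ.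
split=> //; apply: (scaler_eq0_coef HK w2_nz).
by move: E; rewrite a0 scale0r add0r.
Qed.

Lemma span2_exchange_l p q w1 w2 (s1 t1 : K) : s1 != 0 ->
  w1 = s1 *: p + t1 *: q -> span2 p q w2 -> indep w1 w2 ->
  span2 w1 w2 p /\ span2 w1 w2 q.
Proof.
move=> s1_nz Ew1 [s2 [t2 Ew2]] ind.
have sW := span2_subspace w1 w2.
set c := s2 * s1^-1; set d := t2 - c * t1.
have Ed : w2 - c *: w1 = d *: q.
  rewrite Ew1 Ew2 scalerDr !scalerA /c -mulrA (mulVr (HK s1_nz)) mulr1 scalerBl.
  by rewrite opprD addrACA subrr add0r.
have d_nz : d != 0.
  apply/eqP => d0; have := ind (- c) 1.
  by rewrite scale1r scaleNr addrC Ed d0 scale0r => /(_ erefl) [_ /eqP]; rewrite oner_eq0.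
have Wq : span2 w1 w2 q.
  rewrite -(scaleVKr HK q d_nz) -Ed; apply: subspaceZ => //.
  by apply: subspaceB => //; [apply: span2r | apply: subspaceZ => //; apply: span2l].
split=> //; have -> : p = s1^-1 *: (w1 - t1 *: q) by rewrite Ew1 addrK scaleVKr.
by apply: subspaceZ => //; apply: subspaceB => //; [apply: span2l | apply: subspaceZ].
Qed.

Lemma span2_exchange p q w1 w2 : indep w1 w2 -> span2 p q w1 -> span2 p q w2 ->
  forall v, span2 p q v -> span2 w1 w2 v.
Proof.
move=> ind [s1 [t1 Ew1]] Pw2 _ [a [b ->]].
have sW := span2_subspace w1 w2.
suff [Wp Wq] : span2 w1 w2 p /\ span2 w1 w2 q by apply: subspaceD => //; apply: subspaceZ.
have [s1_0 | s1_nz] := eqVneq s1 0; last exact: span2_exchange_l Ew1 Pw2 ind.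
have t1_nz : t1 != 0.
  by apply: contra_neq (indep_nz ind).1 => t1_0; rewrite Ew1 s1_0 t1_0 !scale0r addr0.
have Qw2 : span2 q p w2 by move: Pw2 => [s2 [t2 ->]]; exists t2, s2; rewrite addrC.
rewrite addrC in Ew1; have [Wq Wp] := span2_exchange_l t1_nz Ew1 Qw2 ind.
by split.
Qed.

Lemma not_dim_gt2_span2 p q : (forall v, span2 p q v) -> ~ dim_gt2 V.
Proof.
move=> spanV [v1 [v2 [v3 free3]]].
have ind : indep v1 v2.
  by move=> a b E; have := free3 a b 0; rewrite scale0r addr0 => /(_ E) [].
have [a [b Ev3]] := span2_exchange ind (spanV v1) (spanV v2) (spanV v3).
have := free3 a b (-1); rewrite scaleN1r Ev3 subrr => /(_ erefl) [_ _ /eqP].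
by rewrite oppr_eq0 oner_eq0.
Qed.

Lemma not_indep p q : ~ indep p q -> exists a b : K, a *: p + b *: q = 0 /\ ~ (a = 0 /\ b = 0).
Proof.
move=> dep; apply: NNPP => no_rel; apply: dep => a b E.
by apply: NNPP => ab_nz; apply: no_rel; exists a, b.
Qed.

End Span2.

Section Tsets.
Variables (K : unitRingType) (V : lmodType K).
Hypothesis HK : division_ring K.
Variables (U U' : V -> Prop) (lam : V -> V).
Hypotheses (sU : subspace U) (sU' : subspace U') (dUU' : distant U U').
Hypothesis Hlam : lin_iso U U' lam.

Definition tvec (x y : K) (u : V) := x *: u + y *: lam u.

Definition Tfam (X : V -> Prop) :=
  exists x y : K, [/\ central x, central y, ~ (x = 0 /\ y = 0) & X = Tset U lam x y].

Lemma Tset_mem x y u : U u -> Tset U lam x y (tvec x y u).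
Proof. by exists u. Qed.

Lemma tvecE x y u : U u -> tvec x y u = x *: u + lam (y *: u).
Proof. by move=> Uu; rewrite /tvec (lin_isoZ Hlam). Qed.

Lemma tvec0 x y : tvec x y 0 = 0.
Proof. by rewrite /tvec (lin_iso0 Hlam sU) !scaler0 addr0. Qed.

Lemma tvecD x y u w : U u -> U w -> tvec x y (u + w) = tvec x y u + tvec x y w.
Proof. by move=> Uu Uw; rewrite /tvec (lin_isoD Hlam) // !scalerDr addrACA. Qed.

Lemma tvecZ x y (k : K) u : central x -> central y -> U u ->
  tvec x y (k *: u) = k *: tvec x y u.
Proof.
move=> cx cy Uu; rewrite /tvec (lin_isoZ Hlam) // scalerDr.
by rewrite !(scale_centralC _ _ cx) !(scale_centralC _ _ cy).
Qed.

Lemma coord_uniq a b a' b' : U a -> U b -> U a' -> U b' ->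
  a + lam b = a' + lam b' -> a = a' /\ b = b'.
Proof.
move=> Ua Ub Ua' Ub' E.
have [-> Eb] := distant_decomp_uniq sU sU' dUU' Ua (lin_iso_in Hlam Ub) Ua'
  (lin_iso_in Hlam Ub') E.
by split=> //; apply: (lin_iso_inj Hlam Ub Ub' Eb).
Qed.

Lemma tvec_coord x y x' y' u u' : U u -> U u' -> tvec x y u = tvec x' y' u' ->
  x *: u = x' *: u' /\ y *: u = y' *: u'.
Proof.
move=> Uu Uu'; rewrite !tvecE //; apply: coord_uniq; exact: subspaceZ.
Qed.

Lemma tvec_eq0 x y u : U u -> u != 0 -> tvec x y u = 0 -> x = 0 /\ y = 0.
Proof.
move=> Uu u_nz E.
have [] : x *: u = 0 *: u /\ y *: u = 0 *: u.
  by apply: tvec_coord => //; rewrite E /tvec !scale0r addr0.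
by rewrite scale0r => /(scaler_eq0_coef HK u_nz) -> /(scaler_eq0_coef HK u_nz) ->.
Qed.

Lemma tvec_nz x y u : U u -> u != 0 -> ~ (x = 0 /\ y = 0) -> tvec x y u != 0.
Proof. by move=> Uu u_nz xy_nz; apply/eqP => /(tvec_eq0 Uu u_nz). Qed.

Lemma tvec_cramer x y x' y' u : central x -> central x' -> central y' ->
  y' *: tvec x y u - y *: tvec x' y' u = det x y x' y' *: u /\
  x *: tvec x' y' u - x' *: tvec x y u = det x y x' y' *: lam u.
Proof.
move=> cx cx' cy'; rewrite /tvec /det !scalerDr !scalerA !scalerBl; split.
  by rewrite (cy' x) (cy' y) opprD addrACA subrr addr0.
by rewrite (cx x') (cx' y) opprD addrACA subrr add0r.
Qed.

Lemma subspace_tvec_cramer (S : V -> Prop) x y x' y' u : subspace S ->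
  central x -> central x' -> central y' -> det x y x' y' != 0 ->
  S (tvec x y u) -> S (tvec x' y' u) -> S u /\ S (lam u).
Proof.
move=> sS cx cx' cy' D_nz St St'; have [Eu Elu] := tvec_cramer y u cx cx' cy'.
split; [rewrite -(scaleVKr HK u D_nz) -Eu | rewrite -(scaleVKr HK (lam u) D_nz) -Elu];
  by apply: subspaceZ => //; apply: subspaceB => //; apply: subspaceZ.
Qed.

Lemma Tset_subspace x y : central x -> central y -> subspace (Tset U lam x y).
Proof.
move=> cx cy; split.
- by rewrite -(tvec0 x y); apply: Tset_mem; apply: subspace0.
- move=> _ _ [u [Uu ->]] [w [Uw ->]].
  by rewrite -/(tvec x y u) -/(tvec x y w) -tvecD //; apply: Tset_mem; apply: subspaceD.
- move=> a _ [u [Uu ->]].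
  by rewrite -/(tvec x y u) -tvecZ //; apply: Tset_mem; apply: subspaceZ.
Qed.

Lemma Tset_distant x y x' y' : central x -> central y -> central x' -> central y' ->
  det x y x' y' != 0 -> distant (Tset U lam x y) (Tset U lam x' y').
Proof.
move=> cx cy cx' cy' D_nz; split.
  move=> _ [u [Uu ->]] [w [Uw]]; rewrite -/(tvec x y u) -/(tvec x' y' w).
  move=> /(tvec_coord Uu Uw) [exu eyu].
  suff -> : u = 0 by rewrite tvec0.
  apply: (scaler_nz_eq0 HK D_nz).
  by rewrite /det scalerBl -(cy' x) -(cx' y) -!scalerA exu eyu !scalerA (cy' x') subrr.
move=> v; have sT := Tset_subspace cx cy; have sT' := Tset_subspace cx' cy'.
have sS := subspace_sumsp sT sT'.
have S_U u : U u -> sumsp (Tset U lam x y) (Tset U lam x' y') u /\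
                    sumsp (Tset U lam x y) (Tset U lam x' y') (lam u).
  move=> Uu; apply: (subspace_tvec_cramer sS cx cx' cy' D_nz).
    by apply: sumspl => //; apply: Tset_mem.
  by apply: sumspr => //; apply: Tset_mem.
have [a [b' [Ua Ub' ->]]] := dUU'.2 v; have [b [Ub <-]] := lin_iso_onto Hlam Ub'.
exact: subspaceD sS (S_U a Ua).1 (S_U b Ub).2.
Qed.

Lemma Tset_scale_sub (c x y : K) : central x -> central y ->
  forall w, Tset U lam (c * x) (c * y) w -> Tset U lam x y w.
Proof.
move=> cx cy _ [u [Uu ->]]; exists (c *: u); split; first exact: subspaceZ.
by rewrite (lin_isoZ Hlam) // !scalerA cx cy.
Qed.

Lemma Tset_eq x y x' y' : central x -> central y -> central x' -> central y' ->
  ~ (x = 0 /\ y = 0) -> ~ (x' = 0 /\ y' = 0) -> det x y x' y' = 0 ->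
  Tset U lam x y = Tset U lam x' y'.
Proof.
move=> cx cy cx' cy' xy_nz xy'_nz /eqP; rewrite subr_eq0 => /eqP D0.
have [c [Ex' Ey']] := central_pair_proportional HK cx' xy_nz D0.
have [d [Ex Ey]] : exists d, x = d * x' /\ y = d * y'.
  by apply: (central_pair_proportional HK cx xy'_nz); rewrite cx' -D0 cy'.
apply: pred_ext => w; split; [rewrite {1}Ex {1}Ey | rewrite {1}Ex' {1}Ey'];
  exact: Tset_scale_sub.
Qed.

Lemma det_nz_of_Tset_neq x y x' y' : central x -> central y -> central x' -> central y' ->
  ~ (x = 0 /\ y = 0) -> ~ (x' = 0 /\ y' = 0) ->
  Tset U lam x y <> Tset U lam x' y' -> det x y x' y' != 0.
Proof.
move=> cx cy cx' cy' xy_nz xy'_nz neq.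
by apply/eqP => /(Tset_eq cx cy cx' cy' xy_nz xy'_nz).
Qed.

Lemma Tset_neq_of_det x y x' y' u0 : central x -> central y -> central x' -> central y' ->
  det x y x' y' != 0 -> U u0 -> u0 != 0 -> ~ (x = 0 /\ y = 0) ->
  Tset U lam x y <> Tset U lam x' y'.
Proof.
move=> cx cy cx' cy' D_nz Uu0 u0_nz xy_nz E.
have [T0 _] := Tset_distant cx cy cx' cy' D_nz.
move/eqP: (tvec_nz Uu0 u0_nz xy_nz); apply; apply: T0; first exact: Tset_mem.
by rewrite -E; apply: Tset_mem.
Qed.

Lemma lin_iso_tvec x y : central x -> central y -> ~ (x = 0 /\ y = 0) ->
  lin_iso U (Tset U lam x y) (tvec x y).
Proof.
move=> cx cy xy_nz; split.
- by move=> u Uu; exists u.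
- exact: tvecD.
- by move=> a u Uu; rewrite tvecZ.
- move=> u w Uu Uw /(tvec_coord Uu Uw) [ex ey]; apply/eqP; rewrite -subr_eq0.
  apply/negPn/negP => uw_nz; apply: xy_nz.
  by split; apply: (scaler_eq0_coef HK uw_nz); rewrite scalerBr ?ex ?ey subrr.
- by move=> _ [u [Uu ->]]; exists u.
Qed.

Lemma Tset_inG x y : central x -> central y -> ~ (x = 0 /\ y = 0) -> inG (Tset U lam x y).
Proof.
move=> cx cy xy_nz; have sT := Tset_subspace cx cy; split=> //.
have [x' [y' [cx' cy' xy'_nz D_nz]]] := exists_det_nz xy_nz.
have [g gTU] := lin_iso_inv sU (lin_iso_tvec cx cy xy_nz).
apply: (iso_quot_of_complement sT (Tset_subspace cx' cy') (Tset_distant cx cy cx' cy' D_nz)).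
exact: lin_iso_comp gTU (lin_iso_tvec cx' cy' xy'_nz).
Qed.

Lemma Tset01 : Tset U lam 0 1 = U'.
Proof.
apply: pred_ext => w; split=> [[u [Uu ->]] | U'w].
  by rewrite scale0r add0r scale1r; apply: (lin_iso_in Hlam).
have [u [Uu <-]] := lin_iso_onto Hlam U'w.
by exists u; rewrite scale0r add0r scale1r.
Qed.

Lemma Tfam_Tset x y : central x -> central y -> ~ (x = 0 /\ y = 0) -> Tfam (Tset U lam x y).
Proof. by move=> cx cy xy_nz; exists x, y. Qed.

Lemma Tfam_inG X : Tfam X -> inG X.
Proof. by move=> [x [y [cx cy xy_nz ->]]]; apply: Tset_inG. Qed.

Lemma meet_Tset (S : V -> Prop) x y : meet S (Tset U lam x y) ->
  exists u, [/\ U u, u != 0 & S (tvec x y u)].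
Proof.
move=> [w [w_nz Sw [u [Uu Ew]]]]; exists u; split=> //; last by rewrite /tvec -Ew.
by apply: contra_neq w_nz => u0; rewrite Ew u0 -/(tvec x y 0) tvec0.
Qed.

Lemma meet_Tset_of (S : V -> Prop) x y u : U u -> u != 0 -> ~ (x = 0 /\ y = 0) ->
  S (tvec x y u) -> meet S (Tset U lam x y).
Proof. by move=> Uu u_nz xy_nz Su; exists (tvec x y u); split; [apply: tvec_nz | | exists u]. Qed.

Lemma line_tvec u : U u -> u != 0 -> line (span2 u (lam u)).
Proof. by move=> Uu u_nz; exists u, (lam u); split=> // a b; apply: tvec_eq0. Qed.

(* The line through u and u^lam meets T^(1,0) = U, T^(0,1) = U' and T^(1,1). *)
Lemma Tfam_three u : U u -> u != 0 ->
  exists X Y W, [/\ Tfam X, Tfam Y, Tfam W, [/\ X <> Y, Y <> W & X <> W] &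
    [/\ meet (span2 u (lam u)) X, meet (span2 u (lam u)) Y & meet (span2 u (lam u)) W]].
Proof.
move=> Uu u_nz.
have n10 : ~ ((1 : K) = 0 /\ (0 : K) = 0) := pair_nz_l (oner_neq0 K).
have n01 : ~ ((0 : K) = 0 /\ (1 : K) = 0) := pair_nz_r (oner_neq0 K).
have n11 : ~ ((1 : K) = 0 /\ (1 : K) = 0) := pair_nz_l (oner_neq0 K).
have c0 := @central0 K; have c1 := @central1 K.
exists (Tset U lam 1 0), (Tset U lam 0 1), (Tset U lam 1 1); split.
- exact: Tfam_Tset.
- exact: Tfam_Tset.
- exact: Tfam_Tset.
- split; apply: (Tset_neq_of_det _ _ _ _ _ Uu u_nz) => //;
    by rewrite /det ?(mul0r, mulr0, mul1r, mulr1, subr0, sub0r, oppr_eq0, oner_eq0).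
- by split; apply: (meet_Tset_of Uu u_nz) => //; do 2 eexists.
Qed.

Lemma Tfam_R1 u0 : U u0 -> u0 != 0 -> R1 Tfam.
Proof.
move=> Uu0 u0_nz; split.
  move=> _ _ [x [y [cx cy xy_nz ->]]] [x' [y' [cx' cy' xy'_nz ->]]] neq.
  by apply: Tset_distant => //; apply: det_nz_of_Tset_neq.
have [X [Y [W [TX TY TW neq _]]]] := Tfam_three Uu0 u0_nz.
by exists X, Y, W.
Qed.

Lemma subspace_tvec_transfer (S : V -> Prop) x y (c d : K) A u : subspace S ->
  central x -> central y -> U A -> U u -> c != 0 -> d *: A = c *: u ->
  S (tvec x y A) -> S (tvec x y u).
Proof.
move=> sS cx cy UA Uu c_nz E SA.
rewrite -(scaleVKr HK (tvec x y u) c_nz) -tvecZ // -E tvecZ //.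
by apply: subspaceZ => //; apply: subspaceZ.
Qed.

(* If the T^(x3,y3)-point over u is the sum of points of T^(x1,y1) and
   T^(x2,y2), Cramer's rule makes both of them multiples of points over u. *)
Lemma subspace_tvec_sum (S : V -> Prop) x1 y1 x2 y2 x3 y3 A B u : subspace S ->
  central x1 -> central y1 -> central x2 -> central y2 -> U A -> U B -> U u ->
  det x1 y1 x2 y2 != 0 -> det x3 y3 x2 y2 != 0 -> det x3 y3 x1 y1 != 0 ->
  S (tvec x1 y1 A) -> S (tvec x2 y2 B) ->
  tvec x3 y3 u = tvec x1 y1 A + tvec x2 y2 B -> S u /\ S (lam u).
Proof.
move=> sS cx1 cy1 cx2 cy2 UA UB Uu D12 D32 D31 SA SB E.
have [Ex Ey] : x3 *: u = x1 *: A + x2 *: B /\ y3 *: u = y1 *: A + y2 *: B.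
  have UAB (a b : K) : U (a *: A + b *: B) by apply: subspaceD => //; apply: subspaceZ.
  apply: coord_uniq (subspaceZ _ sU Uu) (subspaceZ _ sU Uu) (UAB _ _) (UAB _ _) _.
  by rewrite -tvecE // E !tvecE // addrACA -(lin_isoD Hlam) //; apply: subspaceZ.
have SuA : S (tvec x1 y1 u).
  exact: subspace_tvec_transfer sS cx1 cy1 UA Uu D32 (cramer_coord cx2 cy2 Ex Ey) SA.
have SuB : S (tvec x2 y2 u).
  rewrite addrC in Ex; rewrite addrC in Ey.
  exact: subspace_tvec_transfer sS cx2 cy2 UB Uu D31 (cramer_coord cx1 cy1 Ex Ey) SB.
exact: subspace_tvec_cramer sS cx1 cx2 cy2 D12 SuA SuB.
Qed.

Lemma Tfam_R2 : R2 Tfam.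
Proof.
move=> L [p [q [_ ->]]] [_ [_ [_ [[x1 [y1 [cx1 cy1 n1 ->]]] [x2 [y2 [cx2 cy2 n2 ->]]]
  [x3 [y3 [cx3 cy3 n3 ->]]] [T12 T23 T13] [m1 m2 m3]]]]] _ [x [y [cx cy nxy ->]]].
have sL := span2_subspace p q.
have [u1 [Uu1 u1_nz L1]] := meet_Tset m1.
have [u2 [Uu2 u2_nz L2]] := meet_Tset m2.
have [u3 [Uu3 u3_nz L3]] := meet_Tset m3.
have D12 := det_nz_of_Tset_neq cx1 cy1 cx2 cy2 n1 n2 T12.
have ind : indep (tvec x1 y1 u1) (tvec x2 y2 u2).
  apply: (indep_of_distant HK (Tset_subspace cx1 cy1) (Tset_subspace cx2 cy2)
           (Tset_distant cx1 cy1 cx2 cy2 D12)); try exact: Tset_mem.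
  - exact: tvec_nz Uu1 u1_nz n1.
  - exact: tvec_nz Uu2 u2_nz n2.
have [a [b E3]] := span2_exchange HK ind L1 L2 L3.
have [Lu3 Llu3] : span2 p q u3 /\ span2 p q (lam u3).
  apply: (subspace_tvec_sum sL cx1 cy1 cx2 cy2 (subspaceZ a sU Uu1) (subspaceZ b sU Uu2) Uu3 D12).
  - exact: det_nz_of_Tset_neq (nesym T23).
  - exact: det_nz_of_Tset_neq (nesym T13).
  - by rewrite tvecZ //; apply: subspaceZ.
  - by rewrite tvecZ //; apply: subspaceZ.
  - by rewrite E3 !tvecZ.
apply: (meet_Tset_of Uu3 u3_nz nxy).
by apply: (subspaceD sL); apply: (subspaceZ _ sL).
Qed.

(* X complementary to U' meets the line through u and u^lam (if at all) in a point
   u + c u^lam; the lemmas below treat c as the slope of X at u. *)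
Section Slopes.
Variable X : V -> Prop.
Hypotheses (sX : subspace X) (dX : distant X U').

Lemma graph_uniq a b b' : U b -> U b' -> X (a + lam b) -> X (a + lam b') -> b = b'.
Proof.
move=> Ub Ub' X1 X2; apply/eqP; rewrite -subr_eq0; apply/eqP.
apply: (lin_iso_eq0 Hlam sU); first exact: subspaceB.
apply: dX.1; last by apply: (lin_iso_in Hlam); apply: subspaceB.
rewrite (lin_isoB Hlam sU) //.
by have := subspaceB sX X1 X2; rewrite opprD addrACA subrr add0r.
Qed.

Lemma slope_of_meet u : U u -> meet (span2 u (lam u)) X -> exists c, X (u + c *: lam u).
Proof.
move=> Uu [w [w_nz [a [b Ew]] Xw]]; have [a0 | a_nz] := eqVneq a 0.
  move/eqP: w_nz; case; apply: dX.1 => //.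
  by rewrite Ew a0 scale0r add0r; apply: subspaceZ => //; apply: (lin_iso_in Hlam).
exists (a^-1 * b).
have -> : u + (a^-1 * b) *: lam u = a^-1 *: w.
  by rewrite Ew scalerDr !scalerA (mulVr (HK a_nz)) scale1r.
exact: subspaceZ.
Qed.

Hypothesis slope : forall u, U u -> u != 0 -> exists c, X (u + c *: lam u).

Lemma slope_pair p q cp cq : U p -> U q -> indep p q ->
  X (p + cp *: lam p) -> X (q + cq *: lam q) -> cp = cq.
Proof.
move=> Up Uq ind Xp Xq; have [c Xpq] := slope (subspaceD sU Up Uq) (indep_addr_nz ind).
have E : cp *: p + cq *: q = c *: (p + q).
  apply: (graph_uniq (subspaceD sU (subspaceZ cp sU Up) (subspaceZ cq sU Uq))
                     (subspaceZ c sU (subspaceD sU Up Uq)) (a := p + q)).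
    rewrite (lin_isoD Hlam) ?(lin_isoZ Hlam) //; try exact: subspaceZ.
    by rewrite addrACA; apply: subspaceD.
  by rewrite (lin_isoZ Hlam) //; apply: subspaceD.
have [] : cp - c = 0 /\ cq - c = 0.
  by apply: ind; rewrite !scalerBl addrACA -opprD E scalerDr subrr.
by move=> /eqP; rewrite subr_eq0 => /eqP -> /eqP; rewrite subr_eq0 => /eqP ->.
Qed.

Lemma slope_central p q c : U p -> U q -> indep p q -> X (p + c *: lam p) -> central c.
Proof.
move=> Up Uq ind Xp k; have [-> | k_nz] := eqVneq k 0; first by rewrite mulr0 mul0r.
have [cq Xq] := slope Uq (indep_nz ind).2.
have indk := indep_scalel HK k_nz ind; have Ukp := subspaceZ k sU Up.
have [ck Xkp] := slope Ukp (indep_nz indk).1.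
have ck_c : ck = c by rewrite (slope_pair Ukp Uq indk Xkp Xq) (slope_pair Up Uq ind Xp Xq).
rewrite {}ck_c in Xkp.
have E : (c * k) *: p = (k * c) *: p.
  apply: (graph_uniq (subspaceZ _ sU Up) (subspaceZ _ sU Up) (a := k *: p)).
    by rewrite -scalerA (lin_isoZ Hlam).
  rewrite -scalerA (lin_isoZ Hlam _ (subspaceZ c sU Up)) (lin_isoZ Hlam _ Up) -scalerDr.
  exact: subspaceZ.
apply/eqP; rewrite -subr_eq0; apply/eqP; apply: (scaler_eq0_coef HK (indep_nz ind).1).
by rewrite scalerBl E subrr.
Qed.

End Slopes.

Lemma Tfam_R3 p q : U p -> U q -> indep p q ->
  ~ (exists S' : (V -> Prop) -> Prop,
       [/\ (forall X, S' X -> inG X), R1 S', R2 S',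
           (forall X, Tfam X -> S' X) & exists X, S' X /\ ~ Tfam X]).
Proof.
move=> Up Uq ind [S' [S'G [S'dist _] S'R2 TS' [X [S'X XT]]]].
have sX : subspace X := (S'G X S'X).1.
have TU' : Tfam U'.
  by rewrite -Tset01; apply: Tfam_Tset (@central0 K) (@central1 K) (pair_nz_r (oner_neq0 K)).
have dX : distant X U'.
  by apply: S'dist (TS' _ TU') _ => // XU'; apply: XT; rewrite XU'.
have slope u : U u -> u != 0 -> exists c, X (u + c *: lam u).
  move=> Uu u_nz; apply: (slope_of_meet sX dX Uu).
  apply: (S'R2 _ (line_tvec Uu u_nz) _ X S'X).
  have [Y1 [Y2 [Y3 [T1 T2 T3 neq meets]]]] := Tfam_three Uu u_nz.
  by exists Y1, Y2, Y3; split=> //; apply: TS'.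
have [c Xc] := slope p Up (indep_nz ind).1.
have cc := slope_central sX dX slope Up Uq ind Xc.
have T1c : Tfam (Tset U lam 1 c) := Tfam_Tset (@central1 K) cc (pair_nz_l (oner_neq0 K)).
have XT1c : X <> Tset U lam 1 c by move=> E; apply: XT; rewrite E.
have [X0 _] := S'dist X _ S'X (TS' _ T1c) XT1c.
move/eqP: (tvec_nz Up (indep_nz ind).1 (pair_nz_l (y := c) (oner_neq0 K))); apply.
by apply: X0; [rewrite /tvec scale1r | apply: Tset_mem].
Qed.

Lemma span2_of_cyclic u0 : U u0 -> (forall u, U u -> exists k : K, u = k *: u0) ->
  forall v, span2 u0 (lam u0) v.
Proof.
move=> Uu0 cyc v; have [a [b' [Ua Ub' ->]]] := dUU'.2 v.
have [b [Ub <-]] := lin_iso_onto Hlam Ub'.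
have [[s ->] [t ->]] := (cyc a Ua, cyc b Ub).
by exists s, t; rewrite (lin_isoZ Hlam).
Qed.

(* dim V > 2 forces dim U >= 2, since V = U (+) U^lam. *)
Lemma exists_indep_U : dim_gt2 V -> exists p q, [/\ U p, U q & indep p q].
Proof.
move=> dimV; apply: NNPP => no_indep.
suff [u0 [Uu0 cyc]] : exists u0, U u0 /\ forall u, U u -> exists k : K, u = k *: u0.
  exact: not_dim_gt2_span2 (span2_of_cyclic Uu0 cyc) dimV.
have [[u0 [Uu0 u0_nz]] | U0] := classic (exists u0, U u0 /\ u0 != 0); last first.
  exists 0; split=> [|u Uu]; first exact: subspace0.
  exists 0; rewrite scaler0; apply: NNPP => u_nz; apply: U0.
  by exists u; split=> //; apply/eqP.
exists u0; split=> // u Uu.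
have [a [b [E ab_nz]]] : exists a b : K, a *: u0 + b *: u = 0 /\ ~ (a = 0 /\ b = 0).
  by apply: not_indep => ind; apply: no_indep; exists u0, u.
have b_nz : b != 0.
  apply/eqP => b0; apply: ab_nz; split=> //; apply: (scaler_eq0_coef HK u0_nz).
  by move: E; rewrite b0 scale0r addr0.
have Eb : b *: u = - (a *: u0) by apply/eqP; rewrite -subr_eq0 opprK addrC E.
by exists (- (b^-1 * a)); rewrite scaleNr -scalerA -scalerN -Eb scaleVKr.
Qed.

Lemma Tfam_regulus : dim_gt2 V -> regulus Tfam.
Proof.
move=> dimV; have [p [q [Up Uq ind]]] := exists_indep_U dimV.
split; [exact: Tfam_inG | exact: Tfam_R1 Up (indep_nz ind).1 | exact: Tfam_R2 |].
exact: Tfam_R3 Up Uq ind.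
Qed.

Lemma Phi_scalar_chain x y :
  Phi U lam (rowmul (rscal x) (rscal y) (mx2_one V)) = Tset U lam x y.
Proof.
apply: pred_ext => w; rewrite /Phi /rowmul /radd /rmul /rscal /rone /rzero /=.
by split=> -[u [Uu ->]]; exists u; rewrite !addr0 add0r (lin_isoZ Hlam).
Qed.

Lemma GL2_one : GL2 U (mx2_one V).
Proof.
have endo0 : endo U (@rzero K V).
  by split=> [u _ | u w _ _ | a u _]; rewrite /rzero ?addr0 ?scaler0 //; apply: subspace0.
have endo_one : mx2_endo U (mx2_one V) by [].
split=> //; exists (mx2_one V); split=> //;
  by split=> u Uu; rewrite /= /radd /rmul /rone /rzero ?addr0 ?add0r.
Qed.

Lemma Tfam_zchain : exists M, GL2 U M /\ Tfam = Phi_zchain U lam M.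
Proof.
exists (mx2_one V); split; first exact: GL2_one.
apply: pred_ext => X; split=> -[x [y [cx cy xy_nz ->]]]; exists x, y;
  by rewrite Phi_scalar_chain.
Qed.

End Tsets.

Theorem proposition4p4 (K : unitRingType) (V : lmodType K)
  (HK : division_ring K) (HdimV : dim_gt2 V)
  (U U' : V -> Prop) (HU : inG U) (HU' : inG U') (HUU' : distant U U')
  (lam : V -> V) (Hlam : lin_iso U U' lam) :
  let T : (V -> Prop) -> Prop := fun X =>
    exists x y : K, [/\ central x, central y, ~ (x = 0 /\ y = 0) & X = Tset U lam x y] in
  (exists M : mx2 V, GL2 U M /\ T = Phi_zchain U lam M) /\ regulus T.
Proof.
move=> T; split; first exact: Tfam_zchain HU.1 Hlam.
exact: (Tfam_regulus HK HU.1 HU'.1 HUU' Hlam HdimV).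
Qed.
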